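(* For any integers $k,l\geq 1$, the equation $$[[x_{k+1},\dots,x_{k+l}],[x_1,\dots,x_k]]=\beta_{k+l}({\sf Sum}(\Phi_{k,l}C_{l,k}))$$ holds in $\mathbb Z\langle x_1,\dots,x_{k+l}\rangle$, where $\Phi_{k,l}C_{l,k}=\{\Phi_{k,l}\circ\tau\mid\tau\in C_{l,k}\}$.
   Context: $\mathbb Z\langle x_1,\dots,x_m\rangle$ is the free associative ring on $x_1,\dots,x_m$, with bracket $[u,v]=uv-vu$ and left-normed brackets $[u_1,\dots,u_r]=[[u_1,\dots,u_{r-1}],u_r]$. $S_m$ is the symmetric group on $\{1,\dots,m\}$. $\gamma_m$ is the additive subgroup spanned by the monomials $x_{\sigma(1)}\cdots x_{\sigma(m)}$, $\sigma\in S_m$; $\beta_m:\gamma_m\to\gamma_m$ is the homomorphism with $\beta_m(x_{\sigma(1)}\cdots x_{\sigma(m)})=[x_{\sigma(1)},\dots,x_{\sigma(m)}]$; for $T\subseteq S_m$, ${\sf Sum}(T)=\sum_{\sigma\in T}x_{\sigma(1)}\cdots x_{\sigma(m)}$. An $(s,t)$-shuffle is a pair $(\alpha,\beta)$ of strictly increasing maps $\alpha:\{1,\dots,s\}\to\{1,\dots,s+t\}$, $\beta:\{1,\dots,t\}\to\{1,\dots,s+t\}$ with disjoint images; ${\sf Sh}^1(s,t)$ is the set of those with $\alpha(1)=1$. For $p,q\geq1$, $0\leq i\leq q-1$ and $(\alpha,\beta)\in{\sf Sh}^1(q-i,i)$, let $\tilde\sigma_{\alpha,\beta,p,q}\in S_{p+q}$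 be given by $\tilde\sigma(j)=j$ for $1\leq j\leq p$, $\tilde\sigma(p+j)=p+\beta(i+1-j)$ for $1\leq j\leq i$, $\tilde\sigma(p+i+j)=p+\alpha(j)$ for $1\leq j\leq q-i$; let $\sigma_{\alpha,\beta,p,q}=\tilde\sigma_{\alpha,\beta,p,q}\circ(1,2)^i$. Set $C_{p,q}=\{\sigma_{\alpha,\beta,p,q}\mid 0\leq i\leq q-1,\ (\alpha,\beta)\in{\sf Sh}^1(q-i,i)\}\subseteq S_{p+q}$. Finally $\Phi_{k,l}\in S_{k+l}$ is defined by $\Phi_{k,l}(i)=i+k$ if $i\leq l$ and $\Phi_{k,l}(i)=i-l$ if $i>l$. *)

From mathcomp Require Import all_boot all_order all_algebra.
Unset Printing Implicit Defensive.
Import GRing.Theory.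
Local Open Scope ring_scope.

(* ---------- The free associative ring Z<x_1,x_2,...> ----------
   An element is represented as a formal finite Z-linear combination of
   words (a word is a seq nat of letter indices, letter i standing for x_i,
   1-based).  Two representatives denote the same element iff all their
   coefficients agree (nc_eq). *)
Definition ncpoly := seq (int * seq nat).

Definition nc_coef (p : ncpoly) (w : seq nat) : int :=
  \sum_(cw <- p | cw.2 == w) cw.1.

Definition nc_eq (p q : ncpoly) : Prop := forall w, nc_coef p w = nc_coef q w.

Definition nc_zero : ncpoly := [::].
Definition nc_add (p q : ncpoly) : ncpoly := p ++ q.
Definition nc_scale (c : int) (p : ncpoly) : ncpoly :=
  [seq (c * cw.1, cw.2) | cw <- p].
Definition nc_opp (p : ncpoly) : ncpoly := nc_scale (-1) p.
Definition nc_mul (p q : ncpoly) : ncpoly :=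
  [seq (a.1 * b.1, a.2 ++ b.2) | a <- p, b <- q].

Definition nc_x (i : nat) : ncpoly := [:: (1, [:: i])].

Definition nc_br (u v : ncpoly) : ncpoly := nc_add (nc_mul u v) (nc_opp (nc_mul v u)).

Definition nc_lbr (us : seq ncpoly) : ncpoly :=
  if us is u :: us' then foldl nc_br u us' else nc_zero.

Definition nc_beta (p : ncpoly) : ncpoly :=
  foldr nc_add nc_zero [seq nc_scale cw.1 (nc_lbr (map nc_x cw.2)) | cw <- p].

(* ---------- Permutations as words ----------
   A permutation sigma of {1..m} is recorded by its word
   [sigma(1); ...; sigma(m)].  A set T of permutations is a duplicate-free
   list of such words; Sum(T) = sum of the monomials x_{sigma(1)}...x_{sigma(m)}. *)
Definition perm_word (m : nat) (s : nat -> nat) : seq nat := [seq s j | j <- iota 1 m].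

Definition Sum (T : seq (seq nat)) : ncpoly := [seq (1, w) | w <- undup T].

(* We encode the finite sets {1..n} by the ordinal types 'I_n (0-based):
   value v in 'I_n corresponds to v+1. *)
Definition shuffle_pred (s t : nat)
  (ab : {ffun 'I_s -> 'I_(s + t)} * {ffun 'I_t -> 'I_(s + t)}) : bool :=
  [&& [forall i : 'I_s, forall j : 'I_s, (i < j)%N ==> (ab.1 i < ab.1 j)%N],
      [forall i : 'I_t, forall j : 'I_t, (i < j)%N ==> (ab.2 i < ab.2 j)%N] &
      [forall i : 'I_s, forall j : 'I_t, ab.1 i != ab.2 j]].

Definition Sh1_pred (s t : nat)
  (ab : {ffun 'I_s -> 'I_(s + t)} * {ffun 'I_t -> 'I_(s + t)}) : bool :=
  @shuffle_pred s t ab && [forall i : 'I_s, (val i == 0%N) ==> (val (ab.1 i) == 0%N)]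
  && (0 < s)%N.

(* 1-based application of a finite function: app1 f j = f(j) for 1 <= j <= n *)
Definition app1 (n m : nat) (f : {ffun 'I_n -> 'I_m}) (j : nat) : nat :=
  nth 0%N [seq (nat_of_ord (f o)).+1 | o <- enum 'I_n] j.-1.

Definition sigma_tilde (p q i : nat)
  (ab : {ffun 'I_(q - i) -> 'I_(q - i + i)} * {ffun 'I_i -> 'I_(q - i + i)})
  (j : nat) : nat :=
  if (j <= p)%N then j
  else if (j <= p + i)%N then (p + @app1 _ _ ab.2 (i + 1 - (j - p)))%N
  else (p + @app1 _ _ ab.1 (j - p - i))%N.

Definition swap12 (j : nat) : nat :=
  if j == 1%N then 2%N else if j == 2%N then 1%N else j.

Definition sigma_abpq (p q i : nat)
  (ab : {ffun 'I_(q - i) -> 'I_(q - i + i)} * {ffun 'I_i -> 'I_(q - i + i)})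
  (j : nat) : nat :=
  sigma_tilde p q i ab (if odd i then swap12 j else j).

Definition C_set (p q : nat) : seq (seq nat) :=
  undup (flatten [seq [seq perm_word (p + q) (sigma_abpq p q i ab)
                      | ab <- enum [pred ab | @Sh1_pred (q - i) i ab]]
                 | i <- iota 0 q]).

Definition Phi (k l : nat) (j : nat) : nat := if (j <= l)%N then (j + k)%N else (j - l)%N.

(* Phi_{k,l} C_{l,k} = { Phi o tau | tau in C_{l,k} } : the word of
   Phi o tau is the image of the word of tau under Phi *)
Definition PhiC (k l : nat) : seq (seq nat) :=
  undup [seq map (Phi k l) w | w <- C_set l k].

From mathcomp Require Import all_boot all_order all_algebra.
From mathcomp Require Import ring zify.
Import GRing.Theory.

(* Write u = [x_(k+1), ..., x_(k+l)].  Repeated use of the Jacobi identity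
   expands [u, [x_1, ..., x_k]] into the sum, over the subsets B of
   {2, ..., k}, of (-1)^|B| [u, x_(w_1), ..., x_(w_k)], where w lists B
   decreasingly and then its complement increasingly.  As
   [x_a, x_b, ...] = - [x_b, x_a, ...], the sign is absorbed by swapping the
   first two letters when |B| is odd.  The words so obtained are exactly the
   images under Phi_(k,l) of the permutations of C_(l,k): the shuffle
   (alpha, beta) corresponds to (complement of B, B), the reversal of beta to
   the decreasing listing of B, and the factor (1,2)^i to the swap. *)

Section Coefficients.
Local Open Scope ring_scope.

Lemma nc_coef_add p q w : nc_coef (nc_add p q) w = nc_coef p w + nc_coef q w.
Proof. by rewrite /nc_coef /nc_add big_cat. Qed.

Lemma nc_coef_nil w : nc_coef [::] w = 0.
Proof. by rewrite /nc_coef big_nil. Qed.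

Lemma nc_coef_scale c p w : nc_coef (nc_scale c p) w = c * nc_coef p w.
Proof. by rewrite /nc_coef /nc_scale big_map /= mulr_sumr. Qed.

Lemma nc_coef_opp p w : nc_coef (nc_opp p) w = - nc_coef p w.
Proof. by rewrite /nc_opp nc_coef_scale mulN1r. Qed.

Lemma nc_coef_mul_pairs p q w : nc_coef (nc_mul p q) w =
  \sum_(a <- p) \sum_(b <- q) (if a.2 ++ b.2 == w then a.1 * b.1 else 0).
Proof. by rewrite /nc_coef /nc_mul big_mkcond big_allpairs_dep. Qed.

Lemma sum_take_drop_eq (x y w : seq nat) (c : int) :
  \sum_(i < (size w).+1) (if (x == take i w) && (y == drop i w) then c else 0)
  = if x ++ y == w then c else 0.
Proof.
case: eqP => [<-|xy_neq_w]; last first.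
  rewrite big1 // => i _; case: eqP => // x_take; case: eqP => // y_drop.
  by rewrite x_take y_drop cat_take_drop in xy_neq_w.
have ltx : (size x < (size (x ++ y)).+1)%N by rewrite size_cat; lia.
rewrite (bigD1 (Ordinal ltx)) //= take_size_cat // drop_size_cat // !eqxx.
rewrite big1 ?addr0 // => i /negbTE i_neq.
case: eqP => // x_take; case: eqP => // _.
have size_x : size x = size (take i (x ++ y)) by rewrite -x_take.
move: i_neq; rewrite -(inj_eq val_inj) /= size_x size_take.
by case: ltnP => [_|]; [rewrite eqxx | have := ltn_ord i; lia].
Qed.

Lemma nc_coef_mul p q w : nc_coef (nc_mul p q) w =
  \sum_(i < (size w).+1) nc_coef p (take i w) * nc_coef q (drop i w).
Proof.
rewrite nc_coef_mul_pairs /nc_coef.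
under [RHS]eq_bigr => i _ do rewrite !big_mkcond /= big_distrl /=.
under [RHS]eq_bigr => i _ do under eq_bigr => a _ do rewrite big_distrr /= big_mkcond /=.
rewrite [RHS]exchange_big /=; apply: eq_bigr => a _.
rewrite [RHS]exchange_big /=; apply: eq_bigr => b _.
rewrite -sum_take_drop_eq; apply: eq_bigr => i _.
by case: eqP; case: eqP => //= _ _; rewrite ?mulr0 ?mul0r.
Qed.

Lemma nc_coef_mulA p q r w :
  nc_coef (nc_mul (nc_mul p q) r) w = nc_coef (nc_mul p (nc_mul q r)) w.
Proof.
rewrite !nc_coef_mul_pairs /nc_mul big_allpairs_dep /=.
apply: eq_bigr => a _; rewrite big_allpairs_dep /=.
by apply: eq_bigr => b _; apply: eq_bigr => c _; rewrite catA mulrA.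
Qed.

Lemma nc_coef_mulDl p q r w :
  nc_coef (nc_mul (nc_add p q) r) w = nc_coef (nc_mul p r) w + nc_coef (nc_mul q r) w.
Proof. by rewrite !nc_coef_mul -big_split; apply: eq_bigr => i _; rewrite nc_coef_add mulrDl. Qed.

Lemma nc_coef_mulDr p q r w :
  nc_coef (nc_mul r (nc_add p q)) w = nc_coef (nc_mul r p) w + nc_coef (nc_mul r q) w.
Proof. by rewrite !nc_coef_mul -big_split; apply: eq_bigr => i _; rewrite nc_coef_add mulrDr. Qed.

Lemma nc_coef_mulNl p r w : nc_coef (nc_mul (nc_opp p) r) w = - nc_coef (nc_mul p r) w.
Proof. by rewrite !nc_coef_mul -sumrN; apply: eq_bigr => i _; rewrite nc_coef_opp mulNr. Qed.

Lemma nc_coef_mulNr p r w : nc_coef (nc_mul r (nc_opp p)) w = - nc_coef (nc_mul r p) w.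
Proof. by rewrite !nc_coef_mul -sumrN; apply: eq_bigr => i _; rewrite nc_coef_opp mulrN. Qed.

Lemma nc_coef_br u v w :
  nc_coef (nc_br u v) w = nc_coef (nc_mul u v) w - nc_coef (nc_mul v u) w.
Proof. by rewrite /nc_br nc_coef_add nc_coef_opp. Qed.

Lemma nc_coef_jacobi u a b w : nc_coef (nc_br u (nc_br a b)) w =
  nc_coef (nc_br (nc_br u a) b) w - nc_coef (nc_br (nc_br u b) a) w.
Proof.
rewrite !nc_coef_br /nc_br.
rewrite !(nc_coef_mulDl, nc_coef_mulDr, nc_coef_mulNl, nc_coef_mulNr) !nc_coef_mulA.
ring.
Qed.

Definition nc_lincomb {T : Type} (p : ncpoly) (J : seq T) (c : T -> int) (P : T -> ncpoly) :=
  forall w, nc_coef p w = \sum_(j <- J) c j * nc_coef (P j) w.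

Section Lincomb.
Context {T : Type} {J : seq T} {c : T -> int}.
Implicit Types (P : T -> ncpoly) (p a : ncpoly).

Lemma nc_lincomb_mull {P p} a :
  nc_lincomb p J c P -> nc_lincomb (nc_mul p a) J c (fun j => nc_mul (P j) a).
Proof.
move=> p_comb w; rewrite nc_coef_mul.
under eq_bigr => i _ do rewrite p_comb big_distrl /=.
rewrite exchange_big /=; apply: eq_bigr => j _.
by rewrite nc_coef_mul mulr_sumr; apply: eq_bigr => i _; rewrite mulrA.
Qed.

Lemma nc_lincomb_mulr {P p} a :
  nc_lincomb p J c P -> nc_lincomb (nc_mul a p) J c (fun j => nc_mul a (P j)).
Proof.
move=> p_comb w; rewrite nc_coef_mul.
under eq_bigr => i _ do rewrite p_comb big_distrr /=.
rewrite exchange_big /=; apply: eq_bigr => j _.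
by rewrite nc_coef_mul mulr_sumr; apply: eq_bigr => i _; rewrite mulrCA.
Qed.

Lemma nc_lincomb_brl {P p} a :
  nc_lincomb p J c P -> nc_lincomb (nc_br p a) J c (fun j => nc_br (P j) a).
Proof.
move=> p_comb w; rewrite nc_coef_br (nc_lincomb_mull a p_comb) (nc_lincomb_mulr a p_comb) -sumrB.
by apply: eq_bigr => j _; rewrite nc_coef_br mulrBr.
Qed.

Lemma nc_lincomb_foldl_br (r : seq ncpoly) {P p} : nc_lincomb p J c P ->
  nc_lincomb (foldl nc_br p r) J c (fun j => foldl nc_br (P j) r).
Proof.
elim: r P p => [|a r IH] P p p_comb //=.
exact: IH (nc_lincomb_brl a p_comb).
Qed.

End Lincomb.

End Coefficients.

Definition swap_head {T : Type} (s : seq T) : seq T :=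
  if s is a :: b :: r then b :: a :: r else s.

Definition swap_head_if {T : Type} (b : bool) (s : seq T) : seq T :=
  if b then swap_head s else s.

Lemma swap_headK {T : Type} : involutive (@swap_head T).
Proof. by case=> [|a [|b r]]. Qed.

Lemma map_swap_head {T U : Type} (f : T -> U) s : map f (swap_head s) = swap_head (map f s).
Proof. by case: s => [|a [|b r]]. Qed.

Lemma map_swap_head_if {T U : Type} (f : T -> U) b s :
  map f (swap_head_if b s) = swap_head_if b (map f s).
Proof. by case: b; rewrite /= ?map_swap_head. Qed.

Lemma count_map_negb (m : bitseq) : count id (map negb m) = size m - count id m.
Proof. by rewrite count_map -(count_predC id m) addKn; apply: eq_count. Qed.

Lemma map_mem_mask {s : seq nat} {m} : uniq s -> size m = size s ->
  [seq x \in mask m s | x <- s] = m.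
Proof.
elim: s m => [|x s IH] [|b m] //= /andP [x_notin uniq_s] [size_m].
congr (_ :: _).
  by case: b; rewrite /= ?inE ?eqxx //; apply/negP => /mem_mask; apply/negP.
rewrite -[RHS](IH m uniq_s size_m); apply/eq_in_map => y y_in; case: b => //.
by rewrite /= inE; case: eqP => // eyx; rewrite -eyx y_in in x_notin.
Qed.

Lemma mask_inj (s : seq nat) m1 m2 : uniq s -> size m1 = size s -> size m2 = size s ->
  mask m1 s = mask m2 s -> m1 = m2.
Proof.
by move=> uniq_s s1 s2 e; rewrite -(map_mem_mask uniq_s s1) -(map_mem_mask uniq_s s2) e.
Qed.

Lemma has_mask_negb (s : seq nat) m : uniq s ->
  ~~ has (mem (mask m s)) (mask (map negb m) s).
Proof.
elim: s m => [|x s IH] [|b m] //= /andP [x_notin uniq_s].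
have mask_notin m' : x \notin mask m' s by apply: contra x_notin; apply: mem_mask.
case: b => /=; last by rewrite negb_or mask_notin IH.
by apply/hasPn => y y_in; rewrite inE negb_or (hasPn (IH m uniq_s) y y_in) andbT;
  apply: contraNneq (mask_notin (map negb m)) => <-.
Qed.

Lemma mask_mem_partition {k : nat} {A B : seq nat} :
  sorted ltn A -> sorted ltn B -> ~~ has (mem B) A ->
  {subset A ++ B <= iota 0 k} -> size A + size B = k ->
  mask [seq x \in B | x <- iota 0 k] (iota 0 k) = B /\
  mask [seq x \notin B | x <- iota 0 k] (iota 0 k) = A.
Proof.
move=> sorted_A sorted_B disj_AB sub_AB size_AB.
have uniq_AB : uniq (A ++ B).
  by rewrite cat_uniq !(sorted_uniq ltn_trans ltnn) // has_sym disj_AB.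
have cover : A ++ B =i iota 0 k.
  by apply: (uniq_min_size uniq_AB sub_AB _).2; rewrite size_iota size_cat size_AB.
have sorted_iota := iota_ltn_sorted 0 k.
split; rewrite -filter_mask; apply: (irr_sorted_eq ltn_trans ltnn) => //;
  try exact: sorted_filter ltn_trans _ _ sorted_iota.
  by move=> x; rewrite mem_filter -cover mem_cat orbC; case: (x \in B).
move=> x; rewrite mem_filter -cover mem_cat.
by case: (boolP (x \in A)) => [/(hasPn disj_AB) ->|_] //; case: (x \in B).
Qed.

Lemma map_iota_nth (F G : nat -> nat) a (s : seq nat) :
  (forall t, t < size s -> G (a + t) = F (nth 0 s t)) ->
  [seq G j | j <- iota a (size s)] = map F s.
Proof.
move=> GF; rewrite -{2}(mkseq_nth 0 s) /mkseq -map_comp -[a]addn0 iotaDl -map_comp.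
by apply/eq_in_map => t; rewrite mem_iota => /andP[_ /GF].
Qed.

Definition ffun_vals {n M : nat} (f : {ffun 'I_n -> 'I_M}) : seq nat :=
  [seq val (f o) | o <- enum 'I_n].

Lemma size_ffun_vals {n M : nat} (f : {ffun 'I_n -> 'I_M}) : size (ffun_vals f) = n.
Proof. by rewrite size_map size_enum_ord. Qed.

Lemma nth_ffun_vals {n M : nat} (f : {ffun 'I_n -> 'I_M}) (i : 'I_n) :
  nth 0 (ffun_vals f) i = f i.
Proof. by rewrite /ffun_vals (nth_map i) ?size_enum_ord // nth_ord_enum. Qed.

Lemma mem_ffun_vals {n M : nat} (f : {ffun 'I_n -> 'I_M}) (i : 'I_n) : val (f i) \in ffun_vals f.
Proof. by apply: (map_f (fun o => val (f o))); rewrite mem_enum. Qed.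

Lemma ffun_vals_lt {n M : nat} (f : {ffun 'I_n -> 'I_M}) x : x \in ffun_vals f -> x < M.
Proof. by case/mapP => o _ ->; apply: ltn_ord. Qed.

Lemma app1E {n M : nat} (f : {ffun 'I_n -> 'I_M}) t : 0 < t <= n ->
  @app1 _ _ f t = (nth 0 (ffun_vals f) t.-1).+1.
Proof.
move=> t_range; rewrite /app1 (map_comp succn (fun o => val (f o))).
by rewrite (nth_map 0) // size_ffun_vals; lia.
Qed.

Lemma increasing_ffunE {n M : nat} (f : {ffun 'I_n -> 'I_M}) :
  [forall i : 'I_n, forall j : 'I_n, (i < j) ==> (f i < f j)] = sorted ltn (ffun_vals f).
Proof.
apply/idP/idP => [inc_f|sorted_f].
  rewrite /ffun_vals sorted_map; apply: (@sub_sorted _ (relpre val ltn)).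
    by move=> i j /= lt_ij; move/forallP: inc_f => /(_ i)/forallP/(_ j)/implyP; apply.
  by rewrite -sorted_map val_enum_ord iota_ltn_sorted.
apply/forallP => i; apply/forallP => j; apply/implyP => lt_ij.
rewrite -!nth_ffun_vals; apply: (sorted_ltn_nth ltn_trans) => //;
  by rewrite inE size_ffun_vals.
Qed.

Lemma ffun_disjointE {n1 n2 M : nat} (f : {ffun 'I_n1 -> 'I_M}) (g : {ffun 'I_n2 -> 'I_M}) :
  [forall i : 'I_n1, forall j : 'I_n2, f i != g j] = ~~ has (mem (ffun_vals g)) (ffun_vals f).
Proof.
apply/forallP/hasPn => [fg_neq _ /mapP [i _ ->]|fg_disj i].
  by apply/mapP => -[j _ /val_inj fg_eq]; move/forallP: (fg_neq i) => /(_ j); rewrite fg_eq eqxx.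
apply/forallP => j; apply: contraNneq (fg_disj _ (mem_ffun_vals f i)) => ->.
exact: mem_ffun_vals.
Qed.

Lemma ffun_head0E {n M : nat} (f : {ffun 'I_n -> 'I_M}) :
  [forall i : 'I_n, (val i == 0) ==> (val (f i) == 0)] = (0 < n) ==> (nth 0 (ffun_vals f) 0 == 0).
Proof.
case: n f => [|n] f; first by apply/forallP => -[].
apply/forallP/idP => [/(_ ord0)|f0 i] /=; first by rewrite -(nth_ffun_vals f ord0).
by apply/implyP => /eqP i0; rewrite -nth_ffun_vals i0.
Qed.

Lemma Sh1_predE s t (ab : {ffun 'I_s -> 'I_(s + t)} * {ffun 'I_t -> 'I_(s + t)}) :
  Sh1_pred s t ab = [&& sorted ltn (ffun_vals ab.1), sorted ltn (ffun_vals ab.2),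
    ~~ has (mem (ffun_vals ab.2)) (ffun_vals ab.1), nth 0 (ffun_vals ab.1) 0 == 0 & 0 < s].
Proof.
rewrite /Sh1_pred /shuffle_pred !increasing_ffunE ffun_disjointE ffun_head0E.
by case: (0 < s); rewrite /= ?andbT ?andbF ?andbA.
Qed.

Lemma ffun_vals_onto {n M : nat} {A : seq nat} : size A = n -> all (gtn M) A ->
  exists f : {ffun 'I_n -> 'I_M}, ffun_vals f = A.
Proof.
case: M => [|M] size_A A_lt.
  case: A size_A A_lt => [|//] <- _; exists [ffun o => o].
  by rewrite /ffun_vals enum_ord0.
exists [ffun o : 'I_n => inord (nth 0 A o)].
rewrite /ffun_vals -{2}(mkseq_nth 0 A) size_A /mkseq -val_enum_ord -map_comp.
apply/eq_map => o /=; rewrite ffunE inordK //.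
by apply: (allP A_lt); rewrite mem_nth ?size_A.
Qed.

(* The bit sequences of length n+1 with first bit false (mem_masks), i.e. the
   subsets B of {2, ..., n+1}. *)
Fixpoint masks (n : nat) : seq bitseq :=
  if n is n'.+1 then [seq rcons m false | m <- masks n'] ++ [seq rcons m true | m <- masks n']
  else [:: [:: false]].

Definition mask_word (n : nat) (m : bitseq) : seq nat :=
  rev (mask m (iota 1 n.+1)) ++ mask (map negb m) (iota 1 n.+1).

Definition mask_sign (m : bitseq) : int := ((-1) ^+ count id m)%R.

Lemma size_masks {n m} : m \in masks n -> size m = n.+1.
Proof.
elim: n m => [|n IH] m /=; first by rewrite inE => /eqP ->.
by rewrite mem_cat => /orP[] /mapP[m' /IH size_m' ->]; rewrite size_rcons size_m'.
Qed.

Lemma mem_masks n m : (m \in masks n) = (size m == n.+1) && (nth true m 0 == false).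
Proof.
elim: n m => [|n IH] m; first by case: m => [|[] [|c r]].
case/lastP: m => [|m b].
  by apply/negbTE; rewrite mem_cat negb_or; apply/andP; split;
    apply/mapP => -[x _] /(congr1 size); rewrite size_rcons.
have mem_rcons b' c :
    (rcons m b' \in [seq rcons x c | x <- masks n]) = (b' == c) && (m \in masks n).
  by apply/mapP/andP => [[x x_in /rcons_inj [-> ->]]|[/eqP -> m_in]]; last exists m.
rewrite mem_cat !mem_rcons IH size_rcons eqSS nth_rcons.
by case: (posnP (size m)) => [->|_] //; case: b; rewrite ?orbF.
Qed.

Lemma uniq_masks n : uniq (masks n).
Proof.
elim: n => [|n IH] //=; rewrite cat_uniq !map_inj_uniq ?IH ?andbT; try exact: rcons_injl.
by apply/hasPn => _ /mapP [y _ ->]; apply/mapP => -[z _ /rcons_inj []].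
Qed.

Lemma masks_cons {n m} : m \in masks n -> exists2 m', m = false :: m' & size m' = n.
Proof.
rewrite mem_masks; case: m => [|b m'] //= /andP [/eqP [size_m'] /eqP ->].
by exists m'.
Qed.

Lemma iota1_rcons n : iota 1 n.+1 = rcons (iota 1 n) n.+1.
Proof. by rewrite -cats1 -[in LHS](addn1 n) iotaD add1n. Qed.

Lemma mask_word_rcons_false n m :
  size m = n.+1 -> mask_word n.+1 (rcons m false) = rcons (mask_word n m) n.+2.
Proof.
move=> size_m; rewrite /mask_word (iota1_rcons n.+1) map_rcons.
by rewrite !mask_rcons ?size_map ?size_iota //= cats0 rcons_cat cats1.
Qed.

Lemma mask_word_rcons_true n m :
  size m = n.+1 -> mask_word n.+1 (rcons m true) = n.+2 :: mask_word n m.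
Proof.
move=> size_m; rewrite /mask_word (iota1_rcons n.+1) map_rcons.
by rewrite !mask_rcons ?size_map ?size_iota //= cats0 cats1 rev_rcons.
Qed.

Lemma mask_word_succ n m : mask_word n m =
  map succn (rev (mask m (iota 0 n.+1)) ++ mask (map negb m) (iota 0 n.+1)).
Proof. by rewrite /mask_word -[1]addn0 iotaDl map_cat map_rev !map_mask. Qed.

Lemma mask_word_cons n m :
  mask_word n (false :: m) = rev (mask m (iota 2 n)) ++ 1 :: mask (map negb m) (iota 2 n).
Proof. by []. Qed.

Lemma mask_word_inj n : {in masks n &, injective (mask_word n)}.
Proof.
move=> _ _ /masks_cons [m1 -> size_m1] /masks_cons [m2 -> size_m2].
rewrite !mask_word_cons => e.
have one_notin m : (1 \in rev (mask m (iota 2 n))) = false.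
  by apply/negP; rewrite mem_rev => /mem_mask; rewrite mem_iota.
have := congr1 (index 1) e; rewrite !index_cat !one_notin /= !addn0 !size_rev => size_eq.
have := congr1 (take (size (mask m1 (iota 2 n)))) e.
rewrite take_size_cat ?size_rev // size_eq take_size_cat ?size_rev // => /(congr1 rev).
by rewrite !revK => /mask_inj -> //; rewrite ?iota_uniq ?size_iota.
Qed.

Lemma mem_mask_word n m x : x \in mask_word n m -> 0 < x <= n.+1.
Proof. by rewrite mem_cat mem_rev => /orP [] /mem_mask; rewrite mem_iota; lia. Qed.

Lemma size_mask_word n m : size m = n.+1 -> size (mask_word n m) = n.+1.
Proof.
move=> size_m; rewrite size_cat size_rev !size_mask ?size_map ?size_iota //.
by rewrite count_map_negb -size_m subnKC ?count_size.
Qed.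

Section JacobiExpansion.
Local Open Scope ring_scope.

Lemma mask_sign_rcons m b : mask_sign (rcons m b) = (if b then -1 else 1) * mask_sign m.
Proof.
rewrite /mask_sign -cats1 count_cat /= addn0 exprD mulrC.
by case: b; rewrite ?expr1 ?expr0.
Qed.

(* By Jacobi, the new letter x_(n+2) lands either at the far right (last bit
   false) or right after u with a minus sign (last bit true). *)
Lemma nc_lincomb_br_lbr u n :
  nc_lincomb (nc_br u (nc_lbr (map nc_x (iota 1 n.+1)))) (masks n) mask_sign
             (fun m => foldl nc_br u (map nc_x (mask_word n m))).
Proof.
elim: n u => [|n IH] u w.
  by rewrite /= big_cons big_nil /mask_word /mask_sign /= expr0 mul1r addr0.
rewrite (iota1_rcons n.+1) map_rcons /nc_lbr /= foldl_rcons -/(nc_lbr _).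
rewrite nc_coef_jacobi (nc_lincomb_brl _ (IH u)) IH /= big_cat !big_map /=.
rewrite -sumrN; congr (_ + _); rewrite big_seq_cond [RHS]big_seq_cond;
  apply: eq_bigr => m /andP[/size_masks size_m _].
  by rewrite mask_word_rcons_false // mask_sign_rcons mul1r map_rcons foldl_rcons.
by rewrite mask_word_rcons_true // mask_sign_rcons mulN1r mulNr.
Qed.

End JacobiExpansion.

Lemma map_swap12 (f : nat -> nat) N : 2 <= N ->
  [seq f (swap12 j) | j <- iota 1 N] = swap_head [seq f j | j <- iota 1 N].
Proof.
case: N => [|[|N]] //= _; congr [:: _, _ & _]; apply/eq_in_map => j.
rewrite mem_iota /swap12 => /andP[lt2j _].
by case: eqP => [ej|_]; [rewrite ej in lt2j | case: eqP => // ej; rewrite ej in lt2j].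
Qed.

Lemma perm_word_sigma_tilde l k i
  (ab : {ffun 'I_(k - i) -> 'I_(k - i + i)} * {ffun 'I_i -> 'I_(k - i + i)}) : i <= k ->
  perm_word (l + k) (sigma_tilde l k i ab) =
  iota 1 l ++ map (addn l \o succn) (rev (ffun_vals ab.2) ++ ffun_vals ab.1).
Proof.
move=> le_ik; have -> : l + k = l + (i + (k - i)) by lia.
rewrite /perm_word iotaD iotaD !map_cat; congr (_ ++ _ ++ _).
- rewrite -[RHS]map_id; apply/eq_in_map => j; rewrite mem_iota => /andP[_ lt_jl].
  by rewrite /sigma_tilde ifT //; lia.
- rewrite -[in iota _ i](size_ffun_vals ab.2) -size_rev; apply: map_iota_nth => t.
  rewrite size_rev size_ffun_vals => lt_ti.
  rewrite /sigma_tilde ifF ?ifT ?app1E ?nth_rev ?size_ffun_vals; try lia.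
  by congr (_ + _.+1); congr nth; lia.
- rewrite -[X in iota _ X](size_ffun_vals ab.1); apply: map_iota_nth => t.
  rewrite size_ffun_vals => lt_t.
  rewrite /sigma_tilde ifF ?ifF ?app1E ?size_ffun_vals; try lia.
  by congr (_ + _.+1); congr nth; lia.
Qed.

Lemma perm_word_sigma l k i
  (ab : {ffun 'I_(k - i) -> 'I_(k - i + i)} * {ffun 'I_i -> 'I_(k - i + i)}) :
  2 <= l + k -> perm_word (l + k) (sigma_abpq l k i ab) =
  swap_head_if (odd i) (perm_word (l + k) (sigma_tilde l k i ab)).
Proof. by rewrite /perm_word /sigma_abpq; case: (odd i) => //=; apply: map_swap12. Qed.

Lemma map_Phi_perm_word_sigma l k i
  (ab : {ffun 'I_(k - i) -> 'I_(k - i + i)} * {ffun 'I_i -> 'I_(k - i + i)}) :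
  1 <= l -> i < k ->
  map (Phi k l) (perm_word (l + k) (sigma_abpq l k i ab)) =
  swap_head_if (odd i) (iota k.+1 l ++ map succn (rev (ffun_vals ab.2) ++ ffun_vals ab.1)).
Proof.
move=> l_gt0 lt_ik; rewrite perm_word_sigma ?map_swap_head_if; last lia.
rewrite perm_word_sigma_tilde 1?ltnW // map_cat -map_comp; congr (swap_head_if _ (_ ++ _)).
  rewrite -[k.+1]addn1 iotaDl; apply/eq_in_map => j; rewrite mem_iota => /andP[_ lt_jl].
  by rewrite /Phi ifT 1?addnC //; lia.
by apply: eq_map => x; rewrite /Phi /= ifF; lia.
Qed.

Definition phi_word (n l : nat) (m : bitseq) : seq nat :=
  swap_head_if (odd (count id m)) (iota n.+2 l ++ mask_word n m).

Lemma head_phi_word {n l m} : 0 < l -> m \in masks n ->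
  (head 0 (phi_word n l m) == n.+2) = ~~ odd (count id m).
Proof.
move=> l_gt0 m_in; rewrite /phi_word.
case: (odd _); last by case: l l_gt0 => //= l _; rewrite eqxx.
have size_w : size (mask_word n m) = n.+1 by apply/size_mask_word/size_masks.
case: l l_gt0 => [|[|l]] //= _; last by rewrite eqn_leq ltnn.
case: (mask_word n m) size_w (@mem_mask_word n m) => // x w _ /(_ x).
by rewrite inE eqxx => /(_ isT) x_range /=; apply/eqP; lia.
Qed.

Lemma phi_word_inj n l : 0 < l -> {in masks n &, injective (phi_word n l)}.
Proof.
move=> l_gt0 m1 m2 m1_in m2_in e.
have odd_eq : odd (count id m1) = odd (count id m2).
  by apply: negb_inj; rewrite -(head_phi_word l_gt0 m1_in) -(head_phi_word l_gt0 m2_in) e.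
move: e; rewrite /phi_word odd_eq => /(congr1 (swap_head_if (odd (count id m2)))).
rewrite /swap_head_if; case: (odd _); rewrite ?swap_headK => /(congr1 (drop l));
  by rewrite !drop_size_cat ?size_iota // => /mask_word_inj; apply.
Qed.

Lemma shuffle_mask_word {n i}
    {ab : {ffun 'I_(n.+1 - i) -> 'I_(n.+1 - i + i)} * {ffun 'I_i -> 'I_(n.+1 - i + i)}} :
  i < n.+1 -> Sh1_pred (n.+1 - i) i ab ->
  exists2 m, m \in masks n &
    count id m = i /\ map succn (rev (ffun_vals ab.2) ++ ffun_vals ab.1) = mask_word n m.
Proof.
set k := n.+1 => lt_ik; rewrite Sh1_predE => /and5P [sorted_A sorted_B disj_AB head_A _].
set A := ffun_vals ab.1 in sorted_A disj_AB head_A *; set B := ffun_vals ab.2 in sorted_B disj_AB *.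
have sub_AB : {subset A ++ B <= iota 0 k}.
  by move=> x /[!mem_cat] /orP [] /ffun_vals_lt; rewrite mem_iota; lia.
have size_AB : size A + size B = k by rewrite !size_ffun_vals; lia.
have [mask_B mask_A] := mask_mem_partition sorted_A sorted_B disj_AB sub_AB size_AB.
have zero_notin_B : 0 \notin B.
  by apply: (hasPn disj_AB); rewrite -(eqP head_A) mem_nth // size_ffun_vals; lia.
exists [seq x \in B | x <- iota 0 k].
  by rewrite mem_masks size_map size_iota eqxx /= (negbTE zero_notin_B).
split; first by rewrite -(size_mask (s := iota 0 k)) ?mask_B ?size_ffun_vals // !size_map.
by rewrite mask_word_succ -map_comp mask_B mask_A.
Qed.

Lemma mask_word_shuffle {n m} : m \in masks n ->
  exists ab : {ffun 'I_(n.+1 - count id m) -> 'I_(n.+1 - count id m + count id m)} *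
              {ffun 'I_(count id m) -> 'I_(n.+1 - count id m + count id m)},
  [/\ count id m < n.+1, Sh1_pred (n.+1 - count id m) (count id m) ab &
      map succn (rev (ffun_vals ab.2) ++ ffun_vals ab.1) = mask_word n m].
Proof.
move=> m_in; have size_m := size_masks m_in; have [m' def_m size_m'] := masks_cons m_in.
set k := n.+1; set i := count id m.
have lt_ik : i < k by rewrite /i def_m /= ltnS -size_m' count_size.
set B := mask m (iota 0 k); set A := mask (map negb m) (iota 0 k).
have size_B : size B = i by rewrite size_mask ?size_iota.
have size_A : size A = k - i by rewrite size_mask ?size_map ?size_iota // count_map_negb size_m.
have bounded (s : bitseq) : all (gtn (k - i + i)) (mask s (iota 0 k)).
  by apply/allP => x /mem_mask; rewrite mem_iota /=; lia.
have [f1 vals_f1] := ffun_vals_onto size_A (bounded _).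
have [f2 vals_f2] := ffun_vals_onto size_B (bounded _).
exists (f1, f2); split => //; last by rewrite vals_f1 vals_f2 mask_word_succ.
rewrite Sh1_predE /= vals_f1 vals_f2 !(sorted_mask ltn_trans) ?iota_ltn_sorted //.
by rewrite has_mask_negb ?iota_uniq //= /A def_m /= subn_gt0 lt_ik.
Qed.

Lemma perm_PhiC n l : 0 < l -> perm_eq (PhiC n.+1 l) [seq phi_word n l m | m <- masks n].
Proof.
move=> l_gt0; apply: uniq_perm; first exact: undup_uniq.
  by rewrite map_inj_in_uniq ?uniq_masks //; apply: phi_word_inj.
move=> v; rewrite mem_undup; apply/mapP/mapP => [[w]|[m m_in ->]].
  rewrite mem_undup => /flatten_mapP [i]; rewrite mem_iota add0n => lt_ik /mapP [ab].
  rewrite mem_enum inE => ab_sh -> ->.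
  have [m m_in [count_m def_w]] := shuffle_mask_word lt_ik ab_sh.
  by exists m; rewrite // map_Phi_perm_word_sigma // def_w /phi_word count_m.
have [ab [lt_ik ab_sh def_w]] := mask_word_shuffle m_in.
exists (perm_word (l + n.+1) (sigma_abpq l n.+1 (count id m) ab)).
  rewrite mem_undup; apply/flatten_mapP; exists (count id m); first by rewrite mem_iota.
  by apply/mapP; exists ab; rewrite ?mem_enum.
by rewrite map_Phi_perm_word_sigma // def_w.
Qed.

Section Beta.
Local Open Scope ring_scope.

Lemma nc_coef_beta p w :
  nc_coef (nc_beta p) w = \sum_(cw <- p) cw.1 * nc_coef (nc_lbr (map nc_x cw.2)) w.
Proof.
elim: p => [|a p IH]; first by rewrite big_nil nc_coef_nil.
by rewrite big_cons /= nc_coef_add nc_coef_scale -IH.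
Qed.

Lemma nc_coef_lbr_swap_head s w : (2 <= size s)%N ->
  nc_coef (nc_lbr (map nc_x (swap_head s))) w = - nc_coef (nc_lbr (map nc_x s)) w.
Proof.
case: s => [|a [|b r]] // _ /=.
have anti : nc_lincomb (nc_br (nc_x b) (nc_x a)) [:: tt] (fun=> -1)
                       (fun=> nc_br (nc_x a) (nc_x b)).
  by move=> w'; rewrite big_seq1 !nc_coef_br; ring.
by rewrite (nc_lincomb_foldl_br (map nc_x r) anti) big_seq1 mulN1r.
Qed.

Lemma nc_coef_lbr_swap_head_if b s w : (2 <= size s)%N ->
  nc_coef (nc_lbr (map nc_x (swap_head_if b s))) w =
  (-1) ^+ b * nc_coef (nc_lbr (map nc_x s)) w.
Proof. by case: b => size_s; rewrite /= ?nc_coef_lbr_swap_head ?mulN1r ?mul1r. Qed.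

Lemma nc_coef_lbr_phi_word n l m w : (0 < l)%N -> m \in masks n ->
  nc_coef (nc_lbr (map nc_x (phi_word n l m))) w =
  mask_sign m * nc_coef (foldl nc_br (nc_lbr (map nc_x (iota n.+2 l)))
                                     (map nc_x (mask_word n m))) w.
Proof.
move=> l_gt0 m_in; rewrite /phi_word nc_coef_lbr_swap_head_if /mask_sign ?signr_odd; last first.
  by rewrite size_cat size_iota size_mask_word ?(size_masks m_in); lia.
by case: l l_gt0 => // l _; rewrite map_cat /= foldl_cat.
Qed.

End Beta.

Theorem corollary1 (k l : nat) (hk : (1 <= k)%N) (hl : (1 <= l)%N) :
  nc_eq
    (nc_br (nc_lbr [seq nc_x j | j <- iota k.+1 l])
           (nc_lbr [seq nc_x j | j <- iota 1 k]))
    (nc_beta (Sum (PhiC k l))).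
Proof.
case: k hk => [|n] // _ w.
rewrite nc_lincomb_br_lbr nc_coef_beta /Sum big_map undup_id ?undup_uniq //.
rewrite (perm_big _ (perm_PhiC n l hl)) big_map big_seq [RHS]big_seq.
by apply: eq_bigr => m m_in; rewrite mul1r nc_coef_lbr_phi_word.
Qed.
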